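(* Let \(G\) be a connected split graph and \(T\) a spanning tree of \(G\). Then \(T\) is the \(\mathcal{F}\)-tree of some BFS ordering of \(G\) if and only if \(T\) is the \(\mathcal{F}\)-tree of some MNS ordering of \(G\). The same equivalence holds with MNS replaced by MCS, by LBFS, and by LDFS, respectively.
   Context: A split graph is a graph whose vertex set can be partitioned into a clique and an independent set. A BFS ordering is a vertex ordering produced by breadth first search (vertices are visited from a start vertex using a queue of discovered but unvisited vertices). With \(n=|V|\): an LBFS ordering is produced by starting with label \((n)\) on a start vertex \(s\), empty labels elsewhere, and for \(i=1,\dots,n\) picking an unnumbered vertex of lexicographically largest label as \(v_i\) and appending \(n-i\) to the labels of its unnumbered neighbors. An LDFS ordering is produced similarly with \(s\) labelled \((0)\), others empty, and prepending \(i\) instead of appending \(n-i\). An MCS ordering is produced by repeatedly choosing an unnumbered vertex with the most numbered neighbors. An MNS ordering is produced with set labels: all labels \(\emptyset\), \(s\) gets \(\{n+1\}\); repeatedly pick an unnumbered vertex whose label is inclusion-maximal, make it \(v_i\), and add \(i\) to the labels of its unnumbered neighbors. Ties are broken arbitrarily in all searches. The \(\mathcal{F}\)-tree of an ordering \(\sigma=(v_1,\dots,v_n)\) is the tree on \(V\) with, for each \(v\neq v_1\), an edge from \(v\) to its leftmost neighbor in \(\sigma\). *)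

From mathcomp Require Import all_boot.
Set Implicit Arguments. Unset Strict Implicit. Unset Printing Implicit Defensive.

Section Graphs.
Variable T : finType.

Definition simple_graph (e : rel T) : Prop := symmetric e /\ irreflexive e.

Definition connected_graph (e : rel T) : Prop :=
  0 < #|T| /\ forall x y, connect e x y.

Definition split_graph (e : rel T) : Prop :=
  exists K I : {set T},
    [/\ K :&: I = set0, K :|: I = setT,
        {in K &, forall x y, x != y -> e x y} &
        {in I &, forall x y, ~~ e x y}].

Definition acyclic (t : rel T) : Prop :=
  forall c : seq T, uniq c -> 2 < size c -> ~~ cycle t c.

Definition spanning_tree (e t : rel T) : Prop :=
  [/\ symmetric t, subrel t e, (forall x y, connect t x y) & acyclic t].

Definition is_ordering (s : seq T) : Prop := uniq s /\ forall x, x \in s.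

Fixpoint lexle (a b : seq nat) : bool :=
  match a, b with
  | [::], _ => true
  | _ :: _, [::] => false
  | x :: a', y :: b' => (x < y) || ((x == y) && lexle a' b')
  end.

Variable e : rel T.

(* indices k (0-based) of the already numbered vertices p that are adjacent
   to w; vertex nth p k is v_(k+1) *)
Definition nbr_steps (p : seq T) (w : T) : seq nat :=
  [seq k <- iota 0 (size p) | e (nth w p k) w].

(* bfs_run vis q out : with visited vertices vis (in order) and queue q of
   discovered but unvisited vertices, the search can end with ordering out.
   Visiting the head v of the queue appends its undiscovered neighbours
   to the queue in an arbitrary order. *)
Inductive bfs_run : seq T -> seq T -> seq T -> Prop :=
| bfs_done vis : bfs_run vis [::] vis
| bfs_step vis v q new out :
    uniq new ->
    (forall w, (w \in new) = [&& e v w, w \notin vis & w \notin v :: q]) ->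
    bfs_run (rcons vis v) (q ++ new) out ->
    bfs_run vis (v :: q) out.

Definition is_bfs (s : seq T) : Prop := exists x0, bfs_run [::] [:: x0] s.

Definition lbfs_label (x0 : T) (p : seq T) (w : T) : seq nat :=
  (if w == x0 then [:: #|T|] else [::]) ++
  [seq #|T| - k.+1 | k <- nbr_steps p w].

Definition is_lbfs (s : seq T) : Prop :=
  is_ordering s /\ exists x0 : T,
    forall p v q, s = p ++ v :: q ->
      forall w, w \notin p -> lexle (lbfs_label x0 p w) (lbfs_label x0 p v).

Definition ldfs_label (x0 : T) (p : seq T) (w : T) : seq nat :=
  rev [seq k.+1 | k <- nbr_steps p w] ++
  (if w == x0 then [:: 0] else [::]).

Definition is_ldfs (s : seq T) : Prop :=
  is_ordering s /\ exists x0 : T,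
    forall p v q, s = p ++ v :: q ->
      forall w, w \notin p -> lexle (ldfs_label x0 p w) (ldfs_label x0 p v).

Definition mcs_label (p : seq T) (w : T) : nat := count (fun u => e u w) p.

Definition is_mcs (s : seq T) : Prop :=
  is_ordering s /\
    forall p v q, s = p ++ v :: q ->
      forall w, w \notin p -> mcs_label p w <= mcs_label p v.

Definition mns_label (x0 : T) (p : seq T) (w : T) : seq nat :=
  (if w == x0 then [:: #|T|.+1] else [::]) ++ [seq k.+1 | k <- nbr_steps p w].

Definition is_mns (s : seq T) : Prop :=
  is_ordering s /\ exists x0 : T,
    forall p v q, s = p ++ v :: q ->
      forall w, w \notin p ->
        {subset mns_label x0 p v <= mns_label x0 p w} ->
        {subset mns_label x0 p w <= mns_label x0 p v}.

Definition leftmost_nbr (s : seq T) (x : T) : T := nth x s (find (e x) s).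

Definition ftree (s : seq T) : rel T :=
  fun x y =>
    ((x != head x s) && (y == leftmost_nbr s x)) ||
    ((y != head y s) && (x == leftmost_nbr s y)).

Definition is_ftree_of (t : rel T) (s : seq T) : Prop := forall x y, t x y = ftree s x y.

End Graphs.

From mathcomp Require Import all_boot.
Set Implicit Arguments. Unset Strict Implicit. Unset Printing Implicit Defensive.

(* Let K be the clique and I the independent set of the split graph, and let r :: s be an
   ordering whose second vertex is adjacent to r.  Its F-tree depends only on r and on the
   order in which s lists the vertices of K: a vertex of I has all its neighbours in K, and
   a vertex of K is attached either to r or, when r is in I and misses it, to the second
   vertex, which is the first vertex of K in s.
   BFS, MNS, MCS, LBFS and LDFS orderings all have their second vertex adjacent to the first
   one r and, when r is in I, list the neighbours of r before its non-neighbours.  For the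
   four label searches this follows from two properties of their choice rules: a vertex
   whose visited neighbours include those of another one is never worse, and it is strictly
   better when the inclusion is strict.  Conversely, starting from r, each of the five
   searches can visit the vertices of K in the order of s (the label searches right after r,
   BFS by enqueueing them before any vertex of I), and so reproduces the F-tree of r :: s. *)

Lemma lexle_refl : reflexive lexle.
Proof. by elim=> //= x a ->; rewrite eqxx orbT. Qed.

Lemma lexle_total : total lexle.
Proof.
elim=> [|x a IH] [|y b] //=.
by case: (ltngtP x y) => //= ->; rewrite IH !orbT.
Qed.

Lemma lexle_trans : transitive lexle.
Proof.
elim=> [|y b IH] [|x a] [|z c] //=.
case/orP=> [xy|/andP[/eqP-> ab]]; case/orP=> [yz|/andP[/eqP<- bc]].
- by rewrite (ltn_trans xy yz).
- by rewrite xy.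
- by rewrite yz.
- by rewrite eqxx (IH _ _ ab bc) orbT.
Qed.

Lemma lexle_anti : antisymmetric lexle.
Proof.
elim=> [|x a IH] [|y b] //= /andP[].
case/orP=> [xy|/andP[/eqP-> ab]]; case/orP=> [yx|/andP[/eqP yx ba]].
- by move: (ltn_trans xy yx); rewrite ltnn.
- by move: xy; rewrite yx ltnn.
- by rewrite ltnn in yx.
- by rewrite (IH b) ?ab ?ba.
Qed.

Lemma subseq_lexle a b : sorted gtn b -> subseq a b -> lexle a b.
Proof.
elim: b a => [|y b IH] [|x a] //= sorted_yb.
have sorted_b := path_sorted sorted_yb.
case: eqP => [->|_] sub_ab; first by rewrite IH ?orbT.
have /allP := order_path_min (rev_trans ltn_trans) sorted_yb.
by move=> /(_ x) -> //; apply: (mem_subseq sub_ab); rewrite mem_head.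
Qed.

Lemma exists_max (T : finType) (A : Type) (le : rel A) {f : T -> A} (P : pred T) :
  total le -> transitive le -> (exists x, P x) ->
  exists2 v, P v & forall w, P w -> le (f w) (f v).
Proof.
move=> le_tot le_tr [x Px].
have le_refl y : le (f y) (f y) by case/orP: (le_tot (f y) (f y)).
suff [v] : exists2 v, v \in x :: enum P & {in x :: enum P, forall w, le (f w) (f v)}.
  rewrite inE mem_enum => v_P v_max; exists v => [|w w_P]; first by case/predU1P: v_P => [->|].
  by apply: v_max; rewrite inE mem_enum; apply/orP; right.
elim: (enum P) x {Px} => [|y s IH] x; first by exists x => [|w]; rewrite ?mem_head // inE => /eqP->.
have [v v_ys v_max] := IH y.
case/orP: (le_tot (f x) (f v)) => [xv|vx].
- by exists v => [|w]; rewrite inE ?v_ys ?orbT // => /predU1P[->|/v_max].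
- exists x => [|w]; first exact: mem_head.
  by rewrite inE => /predU1P[->|/v_max wv] //; apply: le_tr wv vx.
Qed.

Section PredFirst.
Variables (T : eqType) (a : pred T).

Lemma pairwise_pred_first A B : all a A -> all (predC a) B ->
  pairwise (fun x y => a y ==> a x) (A ++ B).
Proof.
elim: A => [_|x A IH /= /andP[ax aA] naB]; last first.
  by rewrite IH // andbT; apply/allP => y _; rewrite ax implybT.
elim: B => //= y B IH /andP[nay naB]; rewrite IH // andbT.
by apply/allP => z /(allP naB) /negbTE ->.
Qed.

Lemma pairwise_pred_first_filter s : pairwise (fun x y => a y ==> a x) s ->
  filter a s ++ filter (predC a) s = s.
Proof.
elim: s => //= x s IH /andP[x_first /IH {}IH]; case ax: (a x) => /=; first by rewrite IH.
have nas : all (predC a) s by apply: sub_all x_first => y; rewrite /= ax implybF.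
by move: (nas); rewrite all_predC has_filter negbK => /eqP->; rewrite (all_filterP nas).
Qed.

End PredFirst.

Section Searches.
Variables (T : finType) (e : rel T).
Hypotheses (e_irr : irreflexive e) (e_conn : forall x y, connect e x y).
Hypothesis T_nonempty : 0 < #|T|.

Lemma ordering_nonempty (s : seq T) : is_ordering s -> s != [::].
Proof. by case: s => // [[_ all_in]]; have [x _] := card_gt0P T_nonempty; have := all_in x. Qed.

Lemma uniq_size_le_card (s : seq T) : uniq s -> size s <= #|T|.
Proof. by move=> Us; rewrite -(card_uniqP Us) max_card. Qed.

Lemma nbr_exists r x : x != r -> exists u, e r u.
Proof.
move=> xr; case/connectP: (e_conn r x) => [[_ /= x_r | u p /= /andP[ru _] _]]; last by exists u.
by rewrite x_r eqxx in xr.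
Qed.

Lemma leftmost_nbr_cons y s x :
  leftmost_nbr e (y :: s) x = if e x y then y else leftmost_nbr e s x.
Proof. by rewrite /leftmost_nbr /=; case: (e x y). Qed.

Lemma leftmost_nbr_filter (a : pred T) s x : {in s, forall y, e x y -> a y} ->
  leftmost_nbr e s x = leftmost_nbr e (filter a s) x.
Proof.
elim: s => //= y s IH nbr_a; rewrite leftmost_nbr_cons IH => [|z zs]; last first.
  by apply: nbr_a; rewrite inE zs orbT.
case exy: (e x y); first by rewrite (nbr_a y (mem_head _ _) exy) leftmost_nbr_cons exy.
by case: (a y); rewrite // leftmost_nbr_cons exy.
Qed.

Lemma eq_ftree r s t :
  (forall x, x != r -> leftmost_nbr e (r :: s) x = leftmost_nbr e (r :: t) x) ->
  ftree e (r :: s) =2 ftree e (r :: t).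
Proof.
move=> eq_lm x y; rewrite /ftree /=.
by case: (eqVneq x r) => [->|xr]; case: (eqVneq y r) => [->|yr] //=; rewrite ?eq_lm.
Qed.

Lemma nbr_steps_filter p a b : {in p, forall u, e u a -> e u b} ->
  nbr_steps e p a = [seq k <- nbr_steps e p b | e (nth a p k) a].
Proof.
move=> sub; rewrite /nbr_steps -filter_predI; apply: eq_in_filter => k.
rewrite mem_iota add0n /= => kp; rewrite (set_nth_default b a kp).
by case ea: (e _ a); rewrite //= (sub _ (mem_nth _ kp) ea).
Qed.

Lemma subseq_nbr_steps p a b : {in p, forall u, e u a -> e u b} ->
  subseq (nbr_steps e p a) (nbr_steps e p b).
Proof. by move/nbr_steps_filter->; apply: filter_subseq. Qed.

Lemma size_nbr_steps_lt p a b : {in p, forall u, e u a -> e u b} ->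
  (exists2 u, u \in p & e u b && ~~ e u a) ->
  size (nbr_steps e p a) < size (nbr_steps e p b).
Proof.
move=> sub [u up /andP[ub n_ua]]; rewrite (nbr_steps_filter sub) size_filter.
rewrite -(count_predC (fun k => e (nth a p k) a)) -[X in X < _]addn0 ltn_add2l -has_count.
apply/hasP; exists (index u p); last by rewrite /predC /= nth_index.
by rewrite mem_filter mem_iota add0n index_mem up nth_index ?ub.
Qed.

Lemma size_nbr_steps p w : size (nbr_steps e p w) = count (e^~ w) p.
Proof.
by rewrite size_filter -[in RHS](mkseq_nth w p) count_map.
Qed.

Lemma sorted_nbr_steps p w : sorted ltn (nbr_steps e p w).
Proof. exact/sorted_filter/iota_ltn_sorted/ltn_trans. Qed.

Lemma nbr_steps_lt p w k : k \in nbr_steps e p w -> k < size p.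
Proof. by rewrite mem_filter mem_iota add0n => /andP[]. Qed.

Lemma uniq_nbr_steps p w : uniq (nbr_steps e p w).
Proof. exact/filter_uniq/iota_uniq. Qed.

Definition head_adj (s : seq T) : Prop := if s is r :: v :: _ then e r v else True.

Definition search_steps (R : seq T -> T -> T -> Prop) (s : seq T) : Prop :=
  forall r p v q, s = r :: p ++ v :: q -> forall w, w \notin r :: p -> R (r :: p) w v.

Definition is_search R s := is_ordering s /\ search_steps R s.

(* [R p w v]: having visited the nonempty prefix [p], whose head is the start vertex, the
   search may visit [v] next although [w] is still unvisited. *)
Record monotone_rule (R : seq T -> T -> T -> Prop) : Prop := MonotoneRule {
  rule_mono : forall r p w v, uniq (r :: p) -> w \notin r :: p -> v \notin r :: p ->
    {in r :: p, forall u, e u w -> e u v} -> R (r :: p) w v;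
  rule_strict : forall r p a b, uniq (r :: p) -> a \notin r :: p -> b \notin r :: p ->
    {in r :: p, forall u, e u a -> e u b} -> (exists2 u, u \in r :: p & e u b && ~~ e u a) ->
    ~ R (r :: p) b a;
  rule_max : forall r p, uniq (r :: p) -> (exists x, x \notin r :: p) ->
    exists2 v, v \notin r :: p & forall w, w \notin r :: p -> R (r :: p) w v }.

Section MonotoneRule.
Variables (R : seq T -> T -> T -> Prop) (R_rule : monotone_rule R).

Lemma search_steps_rcons r p v : search_steps R (r :: p) ->
  (forall w, w \notin r :: p -> R (r :: p) w v) -> search_steps R (r :: rcons p v).
Proof.
move=> steps_p v_max r' p' v' q [<-]; case/lastP: q => [|q x].
  by rewrite cats1 => /rcons_inj[<- <-].
by rewrite -rcons_cons -rcons_cat => /rcons_inj[Ep _]; apply: steps_p; rewrite Ep.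
Qed.

Lemma search_extend r p : uniq (r :: p) -> search_steps R (r :: p) ->
  exists rest, is_search R (r :: p ++ rest).
Proof.
have [n] := ubnP (#|T| - size p); elim: n p => // n IH p lt_n Up steps_p.
have [x x_new | visited] := pickP [predC r :: p]; last first.
  exists [::]; rewrite cats0; split=> //; split=> // y.
  by have := visited y; rewrite inE => /negbFE.
have [v v_new v_max] := rule_max R_rule Up (ex_intro _ x x_new).
have Uv : uniq (r :: rcons p v) by rewrite -rcons_cons rcons_uniq v_new Up.
have := uniq_size_le_card Uv; rewrite /= size_rcons => size_v.
have [|rest search_rest] := IH (rcons p v) _ Uv (search_steps_rcons steps_p v_max).
  by rewrite size_rcons subnS -ltnS prednK // subn_gt0 ltnW.
by exists (v :: rest); rewrite -cat_rcons.
Qed.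

Lemma search_head_adj s : is_search R s -> head_adj s.
Proof.
case: s => [|r [|v s]] // [[Us _] steps_s] /=.
have vr : v != r by move: Us; rewrite /= inE negb_or eq_sym => /andP[/andP[]].
have [u ru] := nbr_exists vr.
have ur : u \notin [:: r] by rewrite inE eq_sym; apply: contraTneq ru => ->; rewrite e_irr.
apply/negPn/negP => n_rv.
apply: (rule_strict R_rule (r := r) (p := [::]) (a := v) (b := u)) => //.
- by rewrite inE.
- by move=> z; rewrite inE => /eqP-> /(negP n_rv).
- by exists r; rewrite ?mem_head // ru n_rv.
- exact: (steps_s r [::] v s).
Qed.

End MonotoneRule.

Lemma bfs_run_nilE vis out : bfs_run e vis [::] out -> out = vis.
Proof. by move=> run; inversion run. Qed.

Lemma bfs_run_consE vis v q out : bfs_run e vis (v :: q) out ->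
  exists2 new, (forall w, (w \in new) = [&& e v w, w \notin vis & w \notin v :: q]) &
    bfs_run e (rcons vis v) (q ++ new) out.
Proof. by move=> run; inversion run; exists new. Qed.

Lemma bfs_run_cat vis q out : bfs_run e vis q out -> exists rest, out = vis ++ q ++ rest.
Proof.
elim=> [vis' | vis' v q' new out' _ _ _ [rest ->]]; first by exists [::]; rewrite /= cats0.
by exists (new ++ rest); rewrite cat_rcons -!catA.
Qed.

Lemma bfs_run_uniq vis q out : bfs_run e vis q out -> uniq (vis ++ q) -> uniq out.
Proof.
elim=> [vis' | vis' v q' new out' U_new new_spec _ IH] U; first by rewrite cats0 in U.
apply: IH; rewrite cat_rcons -[v :: q' ++ new]/((v :: q') ++ new) catA cat_uniq U U_new andbT.
by apply/hasPn => w; rewrite new_spec mem_cat negb_or => /and3P[_ -> ->].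
Qed.

Lemma bfs_run_closed vis q out : bfs_run e vis q out ->
  {in vis, forall x y, e x y -> y \in vis ++ q} -> {in out, forall x y, e x y -> y \in out}.
Proof.
elim=> [vis' | vis' v q' new out' _ new_spec _ IH] closed; first by move=> x /closed; rewrite cats0.
apply: IH => x; rewrite cat_rcons mem_rcons inE => /predU1P[-> y vy | x_vis y /(closed _ x_vis)].
  rewrite !(mem_cat, inE) new_spec vy !inE.
  by case: (y \in vis'); case: (y == v); case: (y \in q').
by rewrite !(mem_cat, inE) => /or3P[] ->; rewrite ?orbT.
Qed.

Lemma nbr_closed_mem (s : seq T) x0 :
  x0 \in s -> {in s, forall x y, e x y -> y \in s} -> forall y, y \in s.
Proof.
move=> x0s closed y; case/connectP: (e_conn x0 y) => p + ->.
by elim: p x0 x0s => //= z p IH x x_s /andP[/(closed _ x_s)/IH]; apply.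
Qed.

Lemma bfs_ordering (s : seq T) : is_bfs e s -> is_ordering s.
Proof.
case=> x0 run; have [rest s_eq] := bfs_run_cat run.
split; first exact: bfs_run_uniq run _.
by apply: (nbr_closed_mem (x0 := x0)); [rewrite s_eq mem_head | apply: bfs_run_closed run _].
Qed.

(* [p] is never empty when the rule is used, so [head w p] is the start vertex. *)
Definition label_rule (cmp : seq nat -> seq nat -> Prop) (lab : T -> seq T -> T -> seq nat)
    (p : seq T) (w v : T) : Prop :=
  cmp (lab (head w p) p w) (lab (head w p) p v).

Definition label_search (cmp : seq nat -> seq nat -> Prop) (lab : T -> seq T -> T -> seq nat)
    (s : seq T) : Prop :=
  is_ordering s /\ exists x0, forall p v q, s = p ++ v :: q ->
    forall w, w \notin p -> cmp (lab x0 p w) (lab x0 p v).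

(* Initially only the start vertex has a nonempty label, which forces it to come first. *)
Lemma label_searchP cmp lab s :
  (forall a, cmp a a) -> (forall a, cmp [::] a) -> (forall a, cmp a [::] -> a = [::]) ->
  (forall x0 w, (lab x0 [::] w == [::]) = (w != x0)) ->
  label_search cmp lab s <-> is_search (label_rule cmp lab) s.
Proof.
move=> cmp_refl cmp_nil cmp_nil_r lab_nil.
have lab_nilE x0 w : w != x0 -> lab x0 [::] w = [::] by rewrite -lab_nil => /eqP.
split=> [[ord_s [x0 lab_steps]] | [ord_s steps_s]]; split=> //.
  case: s ord_s lab_steps => [/ordering_nonempty//|r s] _ lab_steps.
  have r_x0 : r = x0.
    apply/eqP; apply: contraT => rx0.
    have := lab_steps [::] r s erefl x0 isT.
    by rewrite (lab_nilE _ _ rx0) => /cmp_nil_r/eqP; rewrite lab_nil eqxx.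
  by subst x0 => r' p v q [<- s_eq] w wp; apply: (lab_steps (r :: p) v q); rewrite ?s_eq.
case: s ord_s steps_s => [/ordering_nonempty//|x0 s] _ steps_s; exists x0.
move=> [|r p] v q [<-] s_eq w wp; last exact: steps_s x0 p v q (congr1 _ s_eq) w wp.
by case: (eqVneq w x0) => [->|/lab_nilE->].
Qed.

Definition mcs_rule (p : seq T) (w v : T) : Prop := mcs_label e p w <= mcs_label e p v.

Lemma monotone_mcs_rule : monotone_rule mcs_rule.
Proof.
rewrite /mcs_rule.
split=> [r p w v _ _ _ sub | r p a b _ _ _ sub strict | r p _ ex].
- by rewrite /mcs_label -!size_nbr_steps size_subseq ?subseq_nbr_steps.
- by apply/negP; rewrite /mcs_label -!size_nbr_steps -ltnNge size_nbr_steps_lt.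
- exact: exists_max leq_total leq_trans ex.
Qed.

Lemma mcs_searchP s : is_mcs e s <-> is_search mcs_rule s.
Proof.
split=> -[ord_s steps_s]; split=> //.
  by move=> r p v q; apply: (steps_s (r :: p)).
by move=> [|r p] v q s_eq //; apply: steps_s s_eq.
Qed.

Lemma monotone_lex_rule (lab : T -> seq T -> T -> seq nat) (enc : seq nat -> seq nat) :
  (forall r p w, w \notin r :: p -> lab r (r :: p) w = enc (nbr_steps e (r :: p) w)) ->
  {homo enc : ks ls / subseq ks ls} -> (forall ks, size (enc ks) = size ks) ->
  (forall p w, uniq p -> sorted gtn (enc (nbr_steps e p w))) ->
  monotone_rule (label_rule lexle lab).
Proof.
move=> lab_enc enc_subseq size_enc enc_sorted.
have lex_steps r p a b : uniq (r :: p) -> {in r :: p, forall u, e u a -> e u b} ->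
    lexle (enc (nbr_steps e (r :: p) a)) (enc (nbr_steps e (r :: p) b)).
  by move=> Up sub; apply: subseq_lexle (enc_sorted _ _ Up) (enc_subseq _ _ (subseq_nbr_steps sub)).
rewrite /label_rule; split=> [r p w v Up wp vp sub | r p a b Up ap bp sub strict | r p _ ex] /=.
- by rewrite !lab_enc ?lex_steps.
- rewrite !lab_enc // => lex_ba.
  have /(congr1 size) : enc (nbr_steps e (r :: p) a) = enc (nbr_steps e (r :: p) b).
    by apply: lexle_anti; rewrite lex_ba lex_steps.
  by rewrite !size_enc => /eqP; rewrite ltn_eqF ?size_nbr_steps_lt.
- exact: exists_max lexle_total lexle_trans ex.
Qed.

Lemma lbfs_searchP s : is_lbfs e s <-> is_search (label_rule lexle (lbfs_label e)) s.
Proof.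
apply: label_searchP => [a|a|[|k a]|x0 w] //; first exact: lexle_refl.
by rewrite /lbfs_label /nbr_steps /= cats0; case: (eqVneq w x0).
Qed.

Lemma monotone_lbfs_rule : monotone_rule (label_rule lexle (lbfs_label e)).
Proof.
apply: (monotone_lex_rule (enc := map (fun k => #|T| - k.+1))) => [r p w | ks ls | ks | p w Up].
- by rewrite inE negb_or /lbfs_label => /andP[/negbTE-> _].
- exact: map_subseq.
- exact: size_map.
have bound := uniq_size_le_card Up.
rewrite sorted_map; apply: (sub_in_sorted (P := fun k => k < size p) _ _ (sorted_nbr_steps p w)).
  move=> k l; rewrite !unfold_in /= => kp lp kl.
  by rewrite ltn_sub2l // (leq_ltn_trans kl (leq_trans lp bound)).
by apply/allP => k /nbr_steps_lt.
Qed.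

Lemma ldfs_searchP s : is_ldfs e s <-> is_search (label_rule lexle (ldfs_label e)) s.
Proof.
apply: label_searchP => [a|a|[|k a]|x0 w] //; first exact: lexle_refl.
by rewrite /ldfs_label /nbr_steps /=; case: (eqVneq w x0).
Qed.

Lemma monotone_ldfs_rule : monotone_rule (label_rule lexle (ldfs_label e)).
Proof.
apply: (monotone_lex_rule (enc := rev \o map succn)) => [r p w | ks ls | ks | p w _] /=.
- by rewrite inE negb_or /ldfs_label => /andP[/negbTE-> _]; rewrite cats0.
- by rewrite subseq_rev; apply: map_subseq.
- by rewrite size_rev size_map.
rewrite rev_sorted sorted_map; apply: sub_sorted (sorted_nbr_steps p w) => k l.
by rewrite /= ltnS.
Qed.

Definition no_proper_supset (a b : seq nat) : Prop := {subset b <= a} -> {subset a <= b}.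

Lemma mns_searchP s : is_mns e s <-> is_search (label_rule no_proper_supset (mns_label e)) s.
Proof.
apply: label_searchP => [a|a|a|x0 w] //; last first.
  by rewrite /mns_label /nbr_steps /= cats0; case: (eqVneq w x0).
by case: a => // k a /(_ (mem_subseq (sub0seq _)) k (mem_head k a)).
Qed.

Lemma monotone_mns_rule : monotone_rule (label_rule no_proper_supset (mns_label e)).
Proof.
have lab_steps r p w : w \notin r :: p ->
    mns_label e r (r :: p) w = map succn (nbr_steps e (r :: p) w).
  by rewrite inE negb_or /mns_label => /andP[/negbTE-> _].
have uniq_lab r p w : uniq (map succn (nbr_steps e (r :: p) w)).
  by rewrite map_inj_uniq ?uniq_nbr_steps //; apply: succn_inj.
rewrite /label_rule /no_proper_supset.
split=> [r p w v Up wp vp sub | r p a b Up ap bp sub strict | r p _ ex] /=.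
- by rewrite !lab_steps // => _; apply/mem_subseq/map_subseq/subseq_nbr_steps.
- rewrite !lab_steps // => sub_ba.
  have /(uniq_leq_size (uniq_lab _ _ _)) : {subset map succn (nbr_steps e (r :: p) b) <=
                                          map succn (nbr_steps e (r :: p) a)}.
    by apply/sub_ba/mem_subseq/map_subseq/subseq_nbr_steps.
  by rewrite !size_map leqNgt size_nbr_steps_lt.
- have [v vp v_max] := exists_max (f := fun w => size (nbr_steps e (r :: p) w))
    leq_total leq_trans ex.
  exists v => // w wp; rewrite !lab_steps // => sub_vw.
  have [|_ eq_vw] := uniq_min_size (uniq_lab _ _ _) sub_vw; first by rewrite !size_map v_max.
  by move=> k; rewrite eq_vw.
Qed.

End Searches.

Section SplitGraph.
Variables (T : finType) (e : rel T) (K I : {set T}).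
Hypotheses (e_sym : symmetric e) (e_irr : irreflexive e).
Hypotheses (e_conn : forall x y, connect e x y) (T_nonempty : 0 < #|T|).
Hypotheses (KI_disjoint : K :&: I = set0) (KI_cover : K :|: I = setT).
Hypotheses (K_clique : {in K &, forall x y, x != y -> e x y}).
Hypothesis I_indep : {in I &, forall x y, ~~ e x y}.

Lemma in_I x : (x \in I) = (x \notin K).
Proof.
have := in_setT x; rewrite -KI_cover inE.
have := in_set0 x; rewrite -KI_disjoint inE.
by case: (x \in K); case: (x \in I).
Qed.

Lemma nbr_I_in_K r x : r \in I -> e r x -> x \in K.
Proof. by rewrite -[x \in K]negbK -in_I => rI; apply: contraTN => /(I_indep rI). Qed.

Lemma nbr_neq x y : e x y -> y != x.
Proof. by apply: contraTneq => ->; rewrite e_irr. Qed.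

Definition clique_order (s : seq T) : seq T := [seq x <- s | x \in K].

Definition root_nbrs_first (s : seq T) : Prop :=
  if s is r :: s' then r \in I -> pairwise (fun x y => e r y ==> e r x) s' else True.

Definition split_shaped (s : seq T) : Prop :=
  [/\ is_ordering s, head_adj e s & root_nbrs_first s].

Lemma mem_clique_order r s x : is_ordering (r :: s) -> x != r ->
  (x \in clique_order s) = (x \in K).
Proof. by case=> _ /(_ x); rewrite mem_filter inE andbC => /predU1P[->|->]; rewrite ?eqxx. Qed.

Lemma uniq_clique_order r s : is_ordering (r :: s) -> uniq (r :: clique_order s).
Proof. by case=> Us _; apply: subseq_uniq Us; rewrite /= eqxx filter_subseq. Qed.

Lemma clique_order_indep s : all (mem I) s -> clique_order s = [::].
Proof.
move=> sI; apply/eqP; rewrite -[_ == _]negbK -has_filter -all_predC.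
by apply: sub_all sI => x; rewrite /= in_I.
Qed.

Lemma clique_order_tail r s rest : all (mem I) rest ->
  clique_order (r :: clique_order s ++ rest) = clique_order (r :: s).
Proof.
move=> restI; rewrite /clique_order /= filter_cat filter_id -/(clique_order rest).
by rewrite clique_order_indep ?cats0.
Qed.

Lemma ftree_clique_order r s t : is_ordering (r :: s) -> is_ordering (r :: t) ->
  head_adj e (r :: s) -> head_adj e (r :: t) -> clique_order (r :: s) = clique_order (r :: t) ->
  ftree e (r :: s) =2 ftree e (r :: t).
Proof.
move=> [_ all_s] [_ all_t] adj_s adj_t eq_K; apply: eq_ftree => x xr.
have [xK | ] := boolP (x \in K); last first.
  rewrite -in_I => xI; have nbr_K (u : seq T) : {in u, forall y, e x y -> y \in K}.
    by move=> y _; apply: nbr_I_in_K.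
  rewrite (leftmost_nbr_filter (a := fun y => y \in K) (nbr_K (r :: s))).
  rewrite (leftmost_nbr_filter (a := fun y => y \in K) (nbr_K (r :: t))).
  by rewrite -!/(clique_order _) eq_K.
rewrite !leftmost_nbr_cons; case exr: (e x r) => //.
have rK : (r \in K) = false by apply: contraFF exr => /(K_clique xK); apply.
have rI : r \in I by rewrite in_I rK.
have xs : x \in s by have := all_s x; rewrite inE (negbTE xr).
have xt : x \in t by have := all_t x; rewrite inE (negbTE xr).
case: s {all_s} xs adj_s eq_K => // v s _ /= rv; case: t {all_t} xt adj_t => // v' t _ /= rv'.
rewrite /clique_order /= rK (nbr_I_in_K rI rv) (nbr_I_in_K rI rv') => -[<- _].
rewrite !leftmost_nbr_cons K_clique ?(nbr_I_in_K rI rv) //.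
by apply: contraFneq exr => ->; rewrite e_sym.
Qed.

Lemma ftree_transfer (P1 P2 : seq T -> Prop) t :
  (forall s, P1 s -> split_shaped s) -> (forall s, P2 s -> split_shaped s) ->
  (forall r s, split_shaped (r :: s) ->
     exists2 s', P2 (r :: s') & clique_order (r :: s') = clique_order (r :: s)) ->
  (exists s, P1 s /\ is_ftree_of e t s) -> exists s, P2 s /\ is_ftree_of e t s.
Proof.
move=> shaped1 shaped2 build [s [P1s t_s]].
have shaped_s := shaped1 s P1s; have [ord_s adj_s _] := shaped_s.
case: s ord_s P1s t_s shaped_s adj_s => [/(ordering_nonempty T_nonempty)//|r s].
move=> ord_s _ t_s shaped_s adj_s.
have [s' P2s' eq_K] := build r s shaped_s; have [ord_s' adj_s' _] := shaped2 _ P2s'.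
by exists (r :: s'); split=> // x y; rewrite t_s (ftree_clique_order ord_s ord_s').
Qed.

Lemma search_root_nbrs_first R : monotone_rule e R -> forall s, is_search R s -> root_nbrs_first s.
Proof.
move=> R_rule [//|r s] [[Us _] steps_s] rI.
have [| /hasPn all_nbrs] := boolP (has (predC (e r)) s); last first.
  by rewrite -[s]cats0 pairwise_pred_first //; apply/allP => y /all_nbrs /negPn.
move=> has_s; move: Us steps_s; case/split_find: has_s => a A B n_ra /hasPn A_nbrs.
rewrite cat_rcons => Us steps_s.
rewrite pairwise_pred_first //; first by apply/allP => y /A_nbrs /negPn.
move: Us; rewrite -cat_cons cat_uniq => /and3P[UrA /hasPn fresh _].
(* A neighbour b of r after its first non-neighbour a would have been strictly better than a. *)
apply/allP => b bB; apply/negP => rb.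
have [aA bA] : a \notin r :: A /\ b \notin r :: A.
  by split; apply: fresh; rewrite inE ?eqxx ?bB ?orbT.
apply: (rule_strict R_rule UrA aA bA) (steps_s r A a B erefl b bA).
- move=> u; rewrite inE => /predU1P[-> /(negP n_ra) // | uA ua].
  apply: K_clique; [exact: nbr_I_in_K rI (negPn (A_nbrs u uA)) | exact: nbr_I_in_K rI rb |].
  by apply: contraNneq bA => <-; rewrite inE uA orbT.
- by exists r; rewrite ?mem_head // rb.
Qed.

Lemma search_steps_clique_order R r s : monotone_rule e R ->
  is_ordering (r :: s) -> root_nbrs_first (r :: s) -> search_steps R (r :: clique_order s).
Proof.
move=> R_rule ord_s nbrs_first _ p v q [<- c_eq] w wp.
have in_c x : x \in p ++ v :: q -> x \in K.
  by rewrite -c_eq mem_filter => /andP[].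
have vK : v \in K by rewrite in_c // mem_cat mem_head orbT.
move: (uniq_clique_order ord_s); rewrite c_eq -cat_cons cat_uniq.
case/and3P=> Up /hasPn/(_ v (mem_head _ _)) vp _.
apply: (rule_mono R_rule) => // u; rewrite inE => /predU1P[-> rw | up _]; last first.
  apply: K_clique => //; first by rewrite in_c // mem_cat up.
  by apply: contraNneq vp => <-; rewrite inE up orbT.
have [rK | ] := boolP (r \in K).
  by apply: K_clique => //; apply: contraNneq vp => <-; rewrite mem_head.
rewrite -in_I => rI; have wK := nbr_I_in_K rI rw.
have : w \in v :: q.
  move: wp; rewrite inE negb_or => /andP[_ /negbTE wp].
  by rewrite -(mem_clique_order ord_s (nbr_neq rw)) c_eq mem_cat wp in wK.
have := pairwise_filter (mem K) (nbrs_first rI); rewrite -/(clique_order s) c_eq pairwise_cat.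
case/and3P=> _ _ /andP[v_first _]; rewrite inE => /predU1P[<- // | /(allP v_first)].
by rewrite rw.
Qed.

Lemma search_build R : monotone_rule e R -> forall r s, split_shaped (r :: s) ->
  exists2 t, is_search R (r :: t) & clique_order (r :: t) = clique_order (r :: s).
Proof.
move=> R_rule r s [ord_s _ nbrs_first].
have [rest search_rest] := search_extend R_rule (uniq_clique_order ord_s)
  (search_steps_clique_order R_rule ord_s nbrs_first).
exists (clique_order s ++ rest) => //; apply: clique_order_tail.
have [[+ _] _] := search_rest; rewrite -cat_cons cat_uniq => /and3P[_ /hasPn fresh _].
apply/allP => x /fresh; rewrite /= in_I; apply: contra => xK; rewrite inE.
by case: eqVneq => // xr; rewrite (mem_clique_order ord_s xr).
Qed.

Lemma bfs_shaped s : is_bfs e s -> split_shaped s.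
Proof.
move=> bfs_s; have [Us all_in] := bfs_ordering e_conn bfs_s.
case: bfs_s => r /bfs_run_consE[new new_spec run].
have nbr_new w : (w \in new) = e r w.
  by rewrite new_spec !inE /=; case rw: (e r w); rewrite //= nbr_neq.
have [rest /= s_eq] := bfs_run_cat run.
split=> //.
  case: new {new_spec} nbr_new run s_eq => [_ /bfs_run_nilE-> // | v new nbr_new _ -> /=].
  by rewrite -nbr_new mem_head.
rewrite s_eq => _; apply: pairwise_pred_first; first by apply/allP => w; rewrite nbr_new.
move: Us; rewrite s_eq /= cat_uniq => /andP[_ /and3P[_ /hasPn fresh _]].
by apply/allP => y /fresh; rewrite /= nbr_new.
Qed.

Lemma bfs_run_indep vis qI : all (mem I) qI -> {subset K <= vis} -> bfs_run e vis qI (vis ++ qI).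
Proof.
elim: qI vis => [|y qI IH] vis /=; first by rewrite cats0; constructor.
case/andP=> yI qI_I K_vis; apply: (bfs_step (new := [::])) => // [w|].
  rewrite in_nil; apply/esym/and3P => -[yw w_vis _].
  by rewrite K_vis ?(nbr_I_in_K yI yw) in w_vis.
by rewrite cats0 -cat_rcons; apply: IH => // x /K_vis; rewrite mem_rcons inE => ->; rewrite orbT.
Qed.

Lemma bfs_run_clique_first vis qK qI : all (mem I) qI -> {subset K <= vis ++ qK} ->
  exists2 rest, bfs_run e vis (qK ++ qI) (vis ++ qK ++ rest) & all (mem I) rest.
Proof.
elim: qK vis qI => [|k qK IH] vis qI qI_I K_vis.
  by exists qI => //; apply: bfs_run_indep => // x /K_vis; rewrite cats0.
set new := enum [pred w | [&& e k w, w \notin vis & w \notin k :: qK ++ qI]].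
have new_I : all (mem I) new.
  apply/allP => w; rewrite mem_enum => /and3P[_ w_vis w_q].
  rewrite /= in_I; apply: contra w_vis => /K_vis; rewrite mem_cat inE.
  by move: w_q; rewrite inE mem_cat !negb_or => /and3P[/negbTE-> /negbTE-> _]; rewrite !orbF.
have [||rest run rest_I] := IH (rcons vis k) (qI ++ new).
- by rewrite all_cat qI_I new_I.
- by move=> x /K_vis; rewrite cat_rcons.
exists rest => //; apply: (bfs_step (new := new)).
- exact: enum_uniq.
- by move=> w; rewrite mem_enum.
- by rewrite -catA -cat_rcons.
Qed.

Lemma bfs_from_clique r s : is_ordering (r :: s) -> r \in K ->
  exists2 rest, bfs_run e [::] [:: r] (r :: clique_order s ++ rest) & all (mem I) rest.
Proof.
move=> ord_s rK; have := uniq_clique_order ord_s; rewrite cons_uniq => /andP[r_c U_c].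
set NI := enum [pred w | e r w && (w \in I)].
have [||rest run rest_I] := bfs_run_clique_first (vis := [:: r]) (qK := clique_order s) (qI := NI).
- by apply/allP => w; rewrite mem_enum => /andP[].
- by move=> x xK; rewrite inE; case: eqVneq => //= xr; rewrite (mem_clique_order ord_s xr).
exists rest => //; apply: (bfs_step (new := clique_order s ++ NI)) => //.
- rewrite cat_uniq U_c enum_uniq andbT.
  by apply/hasPn => w; rewrite mem_enum mem_filter inE in_I => /andP[_ /negbTE->].
- move=> w; rewrite mem_cat mem_enum !inE /= in_I.
  case: (eqVneq w r) => [->|wr]; first by rewrite e_irr (negbTE r_c).
  by rewrite (mem_clique_order ord_s wr); case wK: (w \in K); rewrite //= K_clique // eq_sym.
Qed.

Lemma bfs_from_indep r s : is_ordering (r :: s) -> r \in I ->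
  pairwise (fun x y => e r y ==> e r x) s ->
  exists2 rest, bfs_run e [::] [:: r] (r :: clique_order s ++ rest) & all (mem I) rest.
Proof.
move=> ord_s rI nbrs_first; have := uniq_clique_order ord_s; rewrite cons_uniq => /andP[_ U_c].
have rK : (r \in K) = false by apply/negbTE; rewrite -in_I.
have in_c x : (x \in clique_order s) = (x \in K).
  by case: (eqVneq x r) => [->|/(mem_clique_order ord_s)//]; rewrite mem_filter rK.
set A := [seq x <- clique_order s | e r x]; set B := [seq x <- clique_order s | ~~ e r x].
have AB : A ++ B = clique_order s by exact/pairwise_pred_first_filter/pairwise_filter.
have in_A w : (w \in A) = e r w by rewrite mem_filter in_c andb_idr // => /(nbr_I_in_K rI).
have U_A : uniq A by apply: filter_uniq.
case: A AB in_A U_A => [|a A'] AB in_A U_A.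
  have c_nil : clique_order s = [::].
    case c_eq : (clique_order s) => [//|x c].
    have xr : x != r by apply: contraFneq rK => <-; rewrite -in_c c_eq mem_head.
    by have [u] := nbr_exists e_conn xr; rewrite -in_A.
  exists [::] => //; rewrite c_nil; apply: (bfs_step (new := [::])) => // [w|].
    by rewrite -in_A.
  exact: bfs_done.
set NI := enum [pred w | [&& e a w, w \in I & w != r]].
have aK : a \in K by rewrite -in_c -AB mem_head.
have ra : e r a by rewrite -in_A mem_head.
have [||rest run rest_I] := bfs_run_clique_first (vis := [:: r; a]) (qK := A' ++ B) (qI := NI).
- by apply/allP => w; rewrite mem_enum => /and3P[].
- by move=> x; rewrite -in_c -AB /= !inE => ->; rewrite orbT.
exists rest => //; rewrite -AB; apply: (bfs_step (new := a :: A')) => //.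
  by move=> w; rewrite in_A !inE /=; case rw: (e r w); rewrite //= nbr_neq.
apply: (bfs_step (new := B ++ NI)).
- rewrite cat_uniq (filter_uniq _ U_c) enum_uniq andbT.
  apply/hasPn => w; rewrite mem_enum mem_filter in_c inE in_I.
  by case/and3P=> _ /negbTE-> _; rewrite andbF.
- move=> w; rewrite mem_cat mem_filter in_c mem_enum in_A !inE in_I.
  case wK: (w \in K) => /=; last by rewrite (negbTE (I_indep rI _)) ?andbT // in_I wK.
  have wr : w != r by apply: contraTneq wK => ->; rewrite rK.
  rewrite wr /=; case rw: (e r w) => //=; rewrite K_clique //.
  by apply: contraFneq rw => <-.
- by rewrite catA.
Qed.

Lemma bfs_build r s : split_shaped (r :: s) ->
  exists2 t, is_bfs e (r :: t) & clique_order (r :: t) = clique_order (r :: s).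
Proof.
move=> [ord_s _ nbrs_first].
have [rest run rest_I] : exists2 rest,
    bfs_run e [::] [:: r] (r :: clique_order s ++ rest) & all (mem I) rest.
  have [rK | ] := boolP (r \in K); first exact: bfs_from_clique.
  by rewrite -in_I => rI; apply: bfs_from_indep => //; apply: nbrs_first.
by exists (clique_order s ++ rest); [exists r | apply: clique_order_tail].
Qed.

Lemma bfs_ftree_iff_search R (P : seq T -> Prop) t :
  monotone_rule e R -> (forall s, P s <-> is_search R s) ->
  (exists s, is_bfs e s /\ is_ftree_of e t s) <-> (exists s, P s /\ is_ftree_of e t s).
Proof.
move=> R_rule P_search.
have search_shaped s : P s -> split_shaped s.
  move/P_search=> search_s; split; first by case: search_s.
  - exact: search_head_adj search_s.
  - exact: search_root_nbrs_first search_s.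
split; apply: ftree_transfer => //; [exact: bfs_shaped | | exact: bfs_shaped | exact: bfs_build].
by move=> r s /(search_build R_rule)[s' /P_search]; exists s'.
Qed.

End SplitGraph.

Theorem theorem4 (T : finType) (e t : rel T) :
  simple_graph e -> connected_graph e -> split_graph e -> spanning_tree e t ->
  let bfs := exists s, is_bfs e s /\ is_ftree_of e t s in
  [/\ bfs <-> (exists s, is_mns e s /\ is_ftree_of e t s),
      bfs <-> (exists s, is_mcs e s /\ is_ftree_of e t s),
      bfs <-> (exists s, is_lbfs e s /\ is_ftree_of e t s) &
      bfs <-> (exists s, is_ldfs e s /\ is_ftree_of e t s)].
Proof.
move=> [e_sym e_irr] [T_gt0 e_conn] [K [I [KI0 KIT K_clique I_indep]]] _ bfs.
have bfs_iff := bfs_ftree_iff_search e_sym e_irr e_conn T_gt0 KI0 KIT K_clique I_indep.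
split; apply: bfs_iff.
- exact: monotone_mns_rule.
- exact: mns_searchP.
- exact: monotone_mcs_rule.
- exact: mcs_searchP.
- exact: monotone_lbfs_rule.
- exact: lbfs_searchP.
- exact: monotone_ldfs_rule.
- exact: ldfs_searchP.
Qed.
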